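(* Let $\mathbb{N}_2=(\{0,1,2\},\oplus,0)$ be the monoid with $0\oplus x=x\oplus 0=x$ for all $x$ and $1\oplus1=1\oplus2=2\oplus1=2\oplus2=2$. The hypergraph $P_3$ with vertex set $\{A,B,C,D\}$ and hyperedges $\{A,B\},\{B,C\},\{C,D\}$ does not have the local-to-global consistency property for $\mathbb{N}_2$-relations.
   Context: $\mathbb{N}_2$ is a positive commutative monoid (positive: $p\oplus q=0$ implies $p=q=0$). Attributes have domains; for a finite attribute set $X$, an $X$-tuple assigns each $A\in X$ a value in its domain; $t[Y]$ is restriction. A $\mathbb{K}$-relation over $X$ is a finitely supported function $R$ from $X$-tuples to the monoid's universe; marginals are $R[Y](t)=\sum_{r: R(r)\neq 0,\, r[Y]=t}R(r)$. A hypergraph with hyperedges $X_1,\dots,X_m$ (vertices as attributes) has the local-to-global consistency property for $\mathbb{K}$-relations if every collection $R_1(X_1),\dots,R_m(X_m)$ that is pairwise consistent (for all $i,j$ some $W$ over $X_i\cup X_j$ has $W[X_i]=R_i$, $W[X_j]=R_j$) is globally consistent (some $W$ over $X_1\cup\dots\cup X_m$ has $W[X_i]=R_i$ for all $i$). *)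

From mathcomp Require Import all_boot.
Set Implicit Arguments. Unset Strict Implicit. Unset Printing Implicit Defensive.

Definition N2 := 'I_3.
Definition n2zero : N2 := ord0.
Definition n2two : N2 := inord 2.
Definition n2add (x y : N2) : N2 :=
  if x == n2zero then y else if y == n2zero then x else n2two.

(* All attributes range over a common domain V.  A tuple is
   encoded as a finite function Att -> option V; it is an X-tuple when it is
   defined exactly on X. *)
Section Rel.
Variables (Att : finType) (V : eqType).

Definition tup := {ffun Att -> option V}.

Definition is_tuple (X : {set Att}) (t : tup) : Prop :=
  forall a, (a \in X) = isSome (t a).

Definition restr (Y : {set Att}) (t : tup) : tup :=
  [ffun a => if a \in Y then t a else None].

Record Krel (X : {set Att}) := {
  kfun : tup -> N2;
  ksupp : seq tup;
  ksupp_ok : forall r, kfun r != n2zero -> r \in ksupp;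
  ktuple_ok : forall r, kfun r != n2zero -> is_tuple X r
}.

Definition marg (X : {set Att}) (R : Krel X) (Y : {set Att}) (t : tup) : N2 :=
  \big[n2add/n2zero]_(r <- undup (ksupp R) | (kfun R r != n2zero) && (restr Y r == t))
     kfun R r.

End Rel.

(* A hypergraph on vertex set Att with hyperedges E 0, ..., E (m-1). *)
Definition pairwise_consistent (Att : finType) (V : eqType) (m : nat)
    (E : 'I_m -> {set Att}) (R : forall i, Krel V (E i)) : Prop :=
  forall i j : 'I_m, exists W : Krel V (E i :|: E j),
    (forall t, marg W (E i) t = kfun (R i) t) /\
    (forall t, marg W (E j) t = kfun (R j) t).

Definition globally_consistent (Att : finType) (V : eqType) (m : nat)
    (E : 'I_m -> {set Att}) (R : forall i, Krel V (E i)) : Prop :=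
  exists W : Krel V (\bigcup_(i < m) E i),
    forall i : 'I_m, forall t, marg W (E i) t = kfun (R i) t.

Definition local_to_global (Att : finType) (m : nat) (E : 'I_m -> {set Att}) : Prop :=
  forall (V : eqType) (R : forall i, Krel V (E i)),
    pairwise_consistent R -> globally_consistent R.

(* vertices A,B,C,D = 0,1,2,3 in 'I_4; hyperedges {A,B},{B,C},{C,D} *)
Definition P3_edges (i : 'I_3) : {set 'I_4} := [set inord i; inord i.+1].

From mathcomp Require Import all_boot.

Set Implicit Arguments. Unset Strict Implicit. Unset Printing Implicit Defensive.

(* Take R(A,B) = {(a, a/3) : a < 6} and R(C,D) = {(d/3, d) : d < 6}, all with
   weight 1, and R(B,C) = {(0,0) |-> 2, (0,1) |-> 1, (1,1) |-> 2}.  Since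
   1 (+) 1 = 2 the three relations are pairwise consistent.  In a global witness
   W, every tuple of the support projects into the supports of the R_i, and a
   projection of weight 1 has exactly one preimage in the support.  Hence B = 0
   in exactly 3 support tuples (from R(A,B)), C = 0 in exactly 3 (from R(C,D)),
   and (B,C) = (0,1) in exactly one; as (1,0) is not in the support of R(B,C),
   C = 0 forces B = 0.  So B = 0 in at least 3 + 1 tuples: a contradiction. *)

Definition n2one : N2 := Ordinal (isT : 1 < 3).

(* [n2two] is [inord 2], which does not reduce under computation; [n2two'] and
   [n2add'] are reducing copies. *)
Definition n2two' : N2 := Ordinal (isT : 2 < 3).

Lemma n2twoE : n2two = n2two'.
Proof. by apply: val_inj; rewrite /= inordK. Qed.

Definition n2add' (x y : N2) : N2 :=
  if x == n2zero then y else if y == n2zero then x else n2two'.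

Lemma n2addE x y : n2add x y = n2add' x y.
Proof. by rewrite /n2add n2twoE. Qed.

Lemma foldr_n2add' (l : seq N2) : foldr n2add' n2zero l = \big[n2add/n2zero]_(x <- l) x.
Proof. by elim: l => [|x l IH]; rewrite ?big_nil // big_cons -IH n2addE. Qed.

Lemma big_n2add_nz (I : Type) (l : seq I) (F : I -> N2) :
  all (fun x => F x != n2zero) l ->
  \big[n2add/n2zero]_(x <- l) F x =
    if l is x :: l' then (if l' is [::] then F x else n2two) else n2zero.
Proof.
elim: l => [|x l IH]; rewrite ?big_nil // big_cons => /andP [/negbTE Fx0 Fl0].
rewrite IH // /n2add Fx0; case: l Fl0 {IH} => [|y l] //= /andP [/negbTE Fy0 _].
by case: l; rewrite ?Fy0 // n2twoE.
Qed.

Section Marginals.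
Variables (Att : finType) (V : eqType).
Implicit Types (X Y : {set Att}) (t r : tup Att V).

Definition supp X (W : Krel V X) := [seq r <- undup (ksupp W) | kfun W r != n2zero].

Lemma mem_supp X (W : Krel V X) r : (r \in supp W) = (kfun W r != n2zero).
Proof. by rewrite mem_filter mem_undup; apply: andb_idr => /ksupp_ok. Qed.

Lemma supp_uniq X (W : Krel V X) : uniq (supp W).
Proof. exact/filter_uniq/undup_uniq. Qed.

Lemma marg_supp X (W : Krel V X) Y t :
  marg W Y t = \big[n2add/n2zero]_(r <- [seq r <- supp W | restr Y r == t]) kfun W r.
Proof. by rewrite big_filter big_filter_cond. Qed.

Lemma supp_nz X (W : Krel V X) (P : pred (tup Att V)) :
  all (fun r => kfun W r != n2zero) [seq r <- supp W | P r].
Proof. by apply/allP => r; rewrite mem_filter mem_supp => /andP []. Qed.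

Lemma restr_tuple X r : is_tuple X r -> restr X r = r.
Proof. by move=> Xr; apply/ffunP => a; rewrite ffunE Xr; case: (r a). Qed.

Lemma marg_self X (R : Krel V X) t : marg R X t = kfun R t.
Proof.
have restrE : {in supp R, forall r, (restr X r == t) = (r == t)}.
  by move=> r; rewrite mem_supp => /ktuple_ok/restr_tuple ->.
rewrite marg_supp (eq_in_filter restrE) big_n2add_nz; last exact: supp_nz.
case: (boolP (t \in supp R)) => [t_supp | t_supp'].
  by rewrite filter_pred1_uniq ?supp_uniq.
rewrite (@eq_in_filter _ _ pred0) ?filter_pred0.
  by move: t_supp'; rewrite mem_supp negbK => /eqP.
by move=> r r_supp /=; apply: contraNF t_supp' => /eqP <-.
Qed.

Lemma marg_restr_neq0 X (W : Krel V X) Y r :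
  r \in supp W -> marg W Y (restr Y r) != n2zero.
Proof.
move=> r_supp; rewrite marg_supp big_n2add_nz ?supp_nz //.
have : r \in [seq s <- supp W | restr Y s == restr Y r] by rewrite mem_filter eqxx.
have := supp_nz W (fun s => restr Y s == restr Y r).
by case: [seq _ <- _ | _] => [|x [|y l]] //= /andP [] //; rewrite n2twoE.
Qed.

Lemma count_restr_marg1 X (W : Krel V X) Y t :
  marg W Y t = n2one -> count (fun r => restr Y r == t) (supp W) = 1.
Proof.
rewrite marg_supp big_n2add_nz ?supp_nz // -size_filter.
by case: [seq _ <- _ | _] => [|x [|y l]] // /(congr1 val); rewrite ?n2twoE.
Qed.

End Marginals.

Lemma pairwise_consistent_lt (Att : finType) (V : eqType) (m : nat)
    (E : 'I_m -> {set Att}) (R : forall i, Krel V (E i)) :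
  (forall i j : 'I_m, i < j -> exists W : Krel V (E i :|: E j),
     (forall t, marg W (E i) t = kfun (R i) t) /\
     (forall t, marg W (E j) t = kfun (R j) t)) ->
  pairwise_consistent R.
Proof.
move=> consistent_lt i j; case: (ltngtP i j) => [/consistent_lt // | | /val_inj ij].
  by move=> /consistent_lt [W [Wj Wi]]; rewrite setUC; exists W.
by subst j; rewrite setUid; exists (R i); split=> t; apply: marg_self.
Qed.

Lemma count_mem_keys (T U : eqType) (s : seq T) (f : T -> U) (ks : seq U) :
  uniq ks -> {in ks, forall k, count (fun x => f x == k) s = 1} ->
  count (fun x => f x \in ks) s = size ks.
Proof.
elim: ks => [|k ks IH] /=; first by rewrite count_pred0.
case/andP=> k_ks ks_uniq one_k; rewrite -IH // => [|l l_ks]; last first.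
  by apply: one_k; rewrite inE l_ks orbT.
rewrite -add1n -(one_k k (mem_head _ _)) -count_predUI.
rewrite (@eq_count _ (predI _ _) pred0) ?count_pred0 ?addn0 => [|x /=].
  by apply: eq_count => x; rewrite inE.
by apply/andP=> -[/eqP -> ]; apply/negP.
Qed.

Lemma count_add_le (T : Type) (s : seq T) (p q u : pred T) :
  subpred q p -> subpred u p -> (forall x, q x -> ~~ u x) ->
  count q s + count u s <= count p s.
Proof.
move=> qp up qu; rewrite -count_predUI (@eq_count _ (predI q u) pred0) => [|x /=].
  by rewrite count_pred0 addn0; apply: sub_count => x /orP [/qp | /up].
by apply/andP=> -[/qu/negP].
Qed.

Definition A : 'I_4 := Ordinal (isT : 0 < 4).
Definition B : 'I_4 := Ordinal (isT : 1 < 4).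
Definition C : 'I_4 := Ordinal (isT : 2 < 4).
Definition D : 'I_4 := Ordinal (isT : 3 < 4).

Lemma ord4_ind (P : 'I_4 -> Prop) : P A -> P B -> P C -> P D -> forall a, P a.
Proof.
move=> PA PB PC PD [[|[|[|[|n]]]] lt_n4] //.
all: by rewrite (bool_irrelevance lt_n4 isT).
Qed.

Definition quad (T : Type) := (T * T * T * T)%type.

Definition qseq T (q : quad T) : seq T := [:: q.1.1.1; q.1.1.2; q.1.2; q.2].

Definition qmap S T (f : S -> T) (q : quad S) : quad T :=
  (f q.1.1.1, f q.1.1.2, f q.1.2, f q.2).

Definition qzip S T U (f : S -> T -> U) (p : quad S) (q : quad T) : quad U :=
  (f p.1.1.1 q.1.1.1, f p.1.1.2 q.1.1.2, f p.1.2 q.1.2, f p.2 q.2).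

(* Finite functions and finset membership do not reduce under computation, so
   concrete tuples over A, B, C, D are handled through their quadruple codes;
   [crestr] is restriction on codes. *)
Notation tuple4 := (tup 'I_4 nat).
Notation row := (quad (option nat)).

Definition code (t : tuple4) : row := (t A, t B, t C, t D).
Definition decode (q : row) : tuple4 :=
  [ffun a : 'I_4 => nth None (qseq q) a].

Lemma code_decodeK : cancel decode code.
Proof. by case=> [[[a b] c] d]; rewrite /code !ffunE. Qed.

Lemma decode_codeK : cancel code decode.
Proof. by move=> t; apply/ffunP; apply: ord4_ind; rewrite ffunE. Qed.

Lemma code_inj : injective code.
Proof. exact: can_inj decode_codeK. Qed.

Definition qmask := quad bool.

Definition mask_at (m : qmask) (a : 'I_4) : bool := nth false (qseq m) a.

Definition is_mask (m : qmask) (X : {set 'I_4}) := forall a, (a \in X) = mask_at m a.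

Definition crestr (m : qmask) : row -> row :=
  qzip (fun (b : bool) x => if b then x else None) m.

Lemma code_restr X m t : is_mask m X -> code (restr X t) = crestr m (code t).
Proof. by move=> Xm; rewrite /code !ffunE !Xm. Qed.

Lemma decode_tuple X m q : is_mask m X -> qmap (@isSome _) q = m -> is_tuple X (decode q).
Proof. by move=> Xm qm; apply: ord4_ind; rewrite Xm -qm ffunE. Qed.

Lemma is_maskU X Y m m' :
  is_mask m X -> is_mask m' Y -> is_mask (qzip orb m m') (X :|: Y).
Proof. by move=> Xm Ym; apply: ord4_ind; rewrite inE Xm Ym. Qed.

Definition lookup (M : seq (row * N2)) (k : row) : N2 :=
  nth n2zero (unzip2 M) (index k (unzip1 M)).

Lemma lookup_notin M k : k \notin unzip1 M -> lookup M k = n2zero.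
Proof.
rewrite -index_mem -leqNgt => M'k; rewrite /lookup nth_default //.
by rewrite !size_map in M'k *.
Qed.

Lemma lookup_mem M k : lookup M k != n2zero -> k \in unzip1 M.
Proof. by apply: contraR => /lookup_notin ->. Qed.

Definition wf_rows (m : qmask) (M : seq (row * N2)) :=
  uniq (unzip1 M) && all (fun k => qmap (@isSome _) k == m) (unzip1 M).

Section RowRelation.
Variables (X : {set 'I_4}) (m : qmask) (Xm : is_mask m X).
Variables (M : seq (row * N2)) (M_wf : wf_rows m M).

Lemma rows_ksupp_ok r : lookup M (code r) != n2zero -> r \in map decode (unzip1 M).
Proof. by move/lookup_mem => Mr; rewrite -[r]decode_codeK map_f. Qed.

Lemma rows_ktuple_ok r : lookup M (code r) != n2zero -> is_tuple X r.
Proof.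
move/lookup_mem => Mr; rewrite -[r]decode_codeK; apply: decode_tuple Xm _.
by case/andP: M_wf => _ /allP/(_ _ Mr)/eqP.
Qed.

Definition rows_rel : Krel nat X := {|
  kfun t := lookup M (code t);
  ksupp := map decode (unzip1 M);
  ksupp_ok := rows_ksupp_ok;
  ktuple_ok := rows_ktuple_ok |}.

End RowRelation.

Definition rows_marg (M : seq (row * N2)) (m : qmask) (k : row) : N2 :=
  foldr n2add' n2zero
    [seq lookup M l | l <- unzip1 M & (lookup M l != n2zero) && (crestr m l == k)].

Lemma marg_rows_rel X m (Xm : is_mask m X) M (M_wf : wf_rows m M) Y mY :
  is_mask mY Y -> forall t, marg (rows_rel Xm M_wf) Y t = rows_marg M mY (code t).
Proof.
move=> YmY t; rewrite /marg /rows_marg /= undup_id; last first.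
  by rewrite (map_inj_uniq (can_inj code_decodeK)); case/andP: M_wf.
rewrite foldr_n2add' big_map big_filter big_map.
apply: eq_big => [k | k _]; rewrite code_decodeK //.
by rewrite -(inj_eq code_inj) (code_restr _ YmY) code_decodeK.
Qed.

Definition rows_consistent (W M : seq (row * N2)) (m : qmask) :=
  all (fun l => crestr m l \in unzip1 M) (unzip1 W) &&
  all (fun k => rows_marg W m k == lookup M k) (unzip1 M).

Lemma rows_margE W M m : rows_consistent W M m -> rows_marg W m =1 lookup M.
Proof.
case/andP=> /allP W_M /allP WM k; case: (boolP (k \in unzip1 M)) => [/WM/eqP // | k_M].
rewrite lookup_notin // /rows_marg (@eq_in_filter _ _ pred0) ?filter_pred0 //.
by move=> l /W_M lM /=; apply: contraNF k_M => /andP [_ /eqP <-].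
Qed.

Lemma marg_rows_consistent X mX (Xm : is_mask mX X) W (W_wf : wf_rows mX W)
    Y mY (Ym : is_mask mY Y) M (M_wf : wf_rows mY M) :
  rows_consistent W M mY ->
  forall t, marg (rows_rel Xm W_wf) Y t = kfun (rows_rel Ym M_wf) t.
Proof. by move=> WM t; rewrite (marg_rows_rel Xm W_wf Ym) (rows_margE WM). Qed.

Definition qmask_of (p : pred nat) : qmask := (p 0, p 1, p 2, p 3).

Definition P3_mask (i : 'I_3) := qmask_of (fun n => (n == i) || (n == i.+1)).

Lemma P3_is_mask i : is_mask (P3_mask i) (P3_edges i).
Proof.
have lt_i3 := ltn_ord i; have lt_i4 : i < 4 := ltnW lt_i3.
by apply: ord4_ind; rewrite !inE -!val_eqE /= !inordK.
Qed.

Definition R_AB : seq (row * N2) :=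
  [seq ((Some a, Some (a %/ 3), None, None), n2one) | a <- iota 0 6].
Definition R_BC : seq (row * N2) :=
  [:: ((None, Some 0, Some 0, None), n2two'); ((None, Some 0, Some 1, None), n2one);
      ((None, Some 1, Some 1, None), n2two')].
Definition R_CD : seq (row * N2) :=
  [seq ((None, None, Some (d %/ 3), Some d), n2one) | d <- iota 0 6].

Definition W_ABC : seq (row * N2) :=
  [seq ((Some a, Some (a %/ 3), Some (nat_of_bool (1 < a)), None), n2one)
  | a <- iota 0 6].
Definition W_BCD : seq (row * N2) :=
  [seq ((None, Some (nat_of_bool (3 < d)), Some (d %/ 3), Some d), n2one)
  | d <- iota 0 6].
Definition W_ABCD : seq (row * N2) :=
  [seq ((Some a, Some (a %/ 3), Some (a %/ 3), Some a), n2one) | a <- iota 0 6].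

Definition P3_rows (i : 'I_3) := match val i with 0 => R_AB | 1 => R_BC | _ => R_CD end.

Lemma P3_rows_wf i : wf_rows (P3_mask i) (P3_rows i).
Proof. by case: i => [[|[|[|?]]] ?]. Qed.

Definition P3_rel i : Krel nat (P3_edges i) := rows_rel (P3_is_mask i) (P3_rows_wf i).

Definition P3_join (i j : 'I_3) :=
  match val i, val j with 0, 1 => W_ABC | 1, 2 => W_BCD | _, _ => W_ABCD end.

Lemma P3_join_ok (i j : 'I_3) : i < j ->
  [&& wf_rows (qzip orb (P3_mask i) (P3_mask j)) (P3_join i j),
      rows_consistent (P3_join i j) (P3_rows i) (P3_mask i) &
      rows_consistent (P3_join i j) (P3_rows j) (P3_mask j)].
Proof. by case: i j => [[|[|[|?]]] ?] [[|[|[|?]]] ?]. Qed.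

Lemma P3_pairwise_consistent : pairwise_consistent P3_rel.
Proof.
apply: pairwise_consistent_lt => i j /P3_join_ok /and3P [W_wf Wi Wj].
exists (rows_rel (is_maskU (P3_is_mask i) (P3_is_mask j)) W_wf).
by split; apply: marg_rows_consistent.
Qed.

(* Over N2 a marginal weight 1 pins down a unique preimage, while weight 2 only
   says "at least two". *)
Definition realizes (S : seq row) (m : qmask) (M : seq (row * N2)) :=
  {in S, forall q, crestr m q \in unzip1 M} /\
  (forall k, lookup M k = n2one -> count (fun q => crestr m q == k) S = 1).

Lemma realizes_supp X (W : Krel nat X) Y m (Ym : is_mask m Y) M (M_wf : wf_rows m M) :
  (forall t, marg W Y t = kfun (rows_rel Ym M_wf) t) -> realizes (map code (supp W)) m M.
Proof.
move=> WM; split=> [_ /mapP [r r_supp ->] | k Mk].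
  rewrite -(code_restr _ Ym); apply: lookup_mem.
  by rewrite -[lookup _ _]WM marg_restr_neq0.
have one_k : count (fun r => restr Y r == decode k) (supp W) = 1.
  by apply: count_restr_marg1; rewrite WM /= code_decodeK.
rewrite count_map -{}[RHS]one_k.
apply: eq_count => r /=.
by rewrite -(code_restr _ Ym) -{1}[k]code_decodeK (inj_eq code_inj).
Qed.

Lemma count_realizes S m M (P : pred row) (ks : seq row) :
  realizes S m M -> uniq ks -> all (fun k => P k == (k \in ks)) (unzip1 M) ->
  all (fun k => lookup M k == n2one) ks -> count (P \o crestr m) S = size ks.
Proof.
move=> [S_M one_M] ks_uniq /allP P_ks /allP ks_one.
rewrite -(count_mem_keys (s := S) (f := crestr m) ks_uniq) => [|k /ks_one /eqP /one_M //].
by apply: eq_in_count => q /S_M /P_ks /eqP.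
Qed.

Lemma no_P3_realization S : ~ (forall i, realizes S (P3_mask i) (P3_rows i)).
Proof.
move=> realS.
have realAB := realS ord0; have realCD := realS ord_max.
have realBC := realS (Ordinal (isT : 1 < 3)).
pose b0 (q : row) := q.1.1.2 == Some 0.
pose c0 (q : row) := q.1.2 == Some 0.
pose c1 (q : row) := q.1.2 == Some 1.
have countB : count b0 S = 3 := count_realizes (P := b0)
  (ks := [seq (Some a, Some 0, None, None) | a <- iota 0 3]) realAB isT isT isT.
have countC : count c0 S = 3 := count_realizes (P := c0)
  (ks := [seq (None, None, Some 0, Some d) | d <- iota 0 3]) realCD isT isT isT.
have countBC : count (predI b0 c1) S = 1 := count_realizes (P := predI b0 c1)
  (ks := [:: (None, Some 0, Some 1, None)]) realBC isT isT isT.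
have c0_b0 : {in S, forall q, c0 q -> b0 q}.
  move=> q /realBC.1 qBC; apply/implyP.
  exact: (allP (isT : all (fun k => c0 k ==> b0 k) (unzip1 R_BC)) _ qBC).
have : count (predI b0 c0) S + count (predI b0 c1) S <= count b0 S.
  apply: count_add_le => [q /andP [] // | q /andP [] // | q /andP [_ /eqP c0q]].
  by rewrite /= /c1 c0q andbF.
rewrite (@eq_in_count _ (predI b0 c0) c0) => [|q /c0_b0 /andb_idl //].
by rewrite countB countC countBC.
Qed.

Lemma P3_not_globally_consistent : ~ globally_consistent P3_rel.
Proof.
case=> W W_cons; apply: (@no_P3_realization (map code (supp W))) => i.
exact: realizes_supp (W_cons i).
Qed.

Theorem proposition10 : ~ local_to_global P3_edges.
Proof.
move=> /(_ nat P3_rel P3_pairwise_consistent).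
exact: P3_not_globally_consistent.
Qed.
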